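(* In the setting of the noncommutative space $\mathbb{R}^4_\theta$ described in the context, the element $g=\sum_{i,j=1}^4g_{ij}\,\mathrm{d}z^i\otimes_A\mathrm{d}z^j\in\Omega^1_A\otimes_A\Omega^1_A$ defines a (generalized) metric on $\Omega^1_A$ (i.e. it is central and determines an $A$-bimodule map $g:A\to\Omega^1_A\otimes_A\Omega^1_A$, $a\mapsto a\,g$), whose inverse metric is the map $g^{-1}:\Omega^1_A\otimes_A\Omega^1_A\to A$ determined by $g^{-1}(\mathrm{d}z^i\otimes_A\mathrm{d}z^j)=g^{ij}$.
   Context: Let $\theta\in\mathbb{R}$ and $R=(R^{ab})$ the $4\times4$ matrix (row $a$, column $b$) with rows $(1,e^{-i\theta},1,e^{i\theta})$, $(e^{i\theta},1,e^{-i\theta},1)$, $(1,e^{i\theta},1,e^{-i\theta})$, $(e^{-i\theta},1,e^{i\theta},1)$. Let $A=\mathbb{C}\langle z^1,z^2,z^3,z^4\rangle/(z^iz^j-R^{ji}z^jz^i)$. Let $\Omega^1_A=\bigoplus_{i=1}^4A\,\mathrm{d}z^i$ be the free left $A$-module with right $A$-action determined by $\mathrm{d}z^i\,z^j=R^{ji}z^j\,\mathrm{d}z^i$, and $\mathrm{d}:A\to\Omega^1_A$ the map with $z^i\mapsto\mathrm{d}z^i$ extended by the Leibniz rule. Let $P$ be the $4\times4$ matrix with rows $(0,0,1,0),(0,0,0,1),(1,0,0,0),(0,1,0,0)$, $(g_{ij})=\tfrac12P$ and $(g^{ij})=2P$; $g^{-1}$ is extended left $A$-linearly using the left basis $\{\mathrm{d}z^i\otimes_A\mathrm{d}z^j\}$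 of $\Omega^1_A\otimes_A\Omega^1_A$. A (generalized) metric is an $A$-bimodule map $g:A\to\Omega^1_A\otimes_A\Omega^1_A$, $g(1)=\sum_\alpha g^\alpha\otimes_Ag_\alpha$, for which there is an $A$-bimodule map $g^{-1}:\Omega^1_A\otimes_A\Omega^1_A\to A$ with $\sum_\alpha g^{-1}(\omega\otimes_Ag^\alpha)g_\alpha=\omega=\sum_\alpha g^\alpha g^{-1}(g_\alpha\otimes_A\omega)$ for all $\omega\in\Omega^1_A$. *)

From HB Require Import structures.
From mathcomp Require Import all_boot all_order all_algebra.
From mathcomp Require Import reals trigo.
From mathcomp Require Import complex.
Set Implicit Arguments. Unset Strict Implicit. Unset Printing Implicit Defensive.
Import Order.TTheory GRing.Theory Num.Theory.
Local Open Scope ring_scope.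

(* Data of R^4_theta.  Indices 1..4 of the paper are 0..3 here.       *)

Definition eith (R : realType) (theta : R) : R[i] :=
  (cos theta +i* sin theta)%C.
Definition emith (R : realType) (theta : R) : R[i] :=
  (cos theta +i* (- sin theta))%C.

(* Rmat theta a b = R^{ab} (row a, column b) *)
Definition Rmat (R : realType) (theta : R) : 'M[R[i]]_4 :=
  let e := eith theta in let f := emith theta in
  let rows := [:: [:: 1; f; 1; e];
                  [:: e; 1; f; 1];
                  [:: 1; e; 1; f];
                  [:: f; 1; e; 1]] in
  \matrix_(a < 4, b < 4) nth 0 (nth [::] rows a) b.

Definition Pmat (K : nzRingType) : 'M[K]_4 :=
  let rows := [:: [:: 0; 0; 1; 0];
                  [:: 0; 0; 0; 1];
                  [:: 1; 0; 0; 0];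
                  [:: 0; 1; 0; 0]] in
  \matrix_(a < 4, b < 4) nth 0 (nth [::] rows a) b.

Definition glow (R : realType) : 'M[R[i]]_4 := 2^-1 *: Pmat R[i].
Definition gup (R : realType) : 'M[R[i]]_4 := 2 *: Pmat R[i].

(* The algebra A = C<z1..z4>/(z^i z^j - R^{ji} z^j z^i), characterised *)
(* by its defining presentation.                                        *)

Definition is_alg_hom (K : nzRingType) (A B : lalgType K) (f : A -> B) : Prop :=
  [/\ forall a b, f (a + b) = f a + f b,
      forall (c : K) a, f (c *: a) = c *: f a,
      forall a b, f (a * b) = f a * f b
    & f 1 = 1].

Definition theta_rel (R : realType) (theta : R) (B : lalgType R[i])
  (w : 'I_4 -> B) : Prop :=
  forall i j : 'I_4, w i * w j = Rmat theta j i *: (w j * w i).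

Definition generated_by (K : nzRingType) (A : lalgType K) (z : 'I_4 -> A) : Prop :=
  forall P : A -> Prop,
    (forall i, P (z i)) -> (forall c : K, P (c%:A)) ->
    (forall a b, P a -> P b -> P (a + b)) ->
    (forall a b, P a -> P b -> P (a * b)) ->
    forall a, P a.

Definition presented_Rtheta (R : realType) (theta : R) (A : algType R[i])
  (z : 'I_4 -> A) : Prop :=
  [/\ theta_rel theta z,
      generated_by z
    & forall (B : algType R[i]) (w : 'I_4 -> B), theta_rel theta w ->
        exists f : A -> B, is_alg_hom f /\ forall i, f (z i) = w i].

(* The bimodules Omega^1_A = (+)_i A dz^i and Omega^1 (x)_A Omega^1    *)
(* (free left modules).  The right action is encoded by the algebra    *)
(* endomorphisms sigma_i with dz^i b = sigma_i(b) dz^i, i.e.            *)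
(* sigma_i(z^j) = R^{ji} z^j.                                           *)

Section Bimodules.
Variables (A : nzRingType) (sigma : 'I_4 -> A -> A).

(* omega = sum_i omega i dz^i *)
Definition Om1 := 'I_4 -> A.
(* t = sum_{i,j} t i j dz^i (x)_A dz^j *)
Definition Om2 := 'I_4 -> 'I_4 -> A.

Definition dz (k : 'I_4) : Om1 := fun i => if i == k then 1 else 0.

Definition add1 (u v : Om1) : Om1 := fun i => u i + v i.
Definition lact1 (a : A) (u : Om1) : Om1 := fun i => a * u i.
Definition ract1 (u : Om1) (b : A) : Om1 := fun i => u i * sigma i b.
Definition sum1 n (F : 'I_n -> Om1) : Om1 := fun i => \sum_(k < n) F k i.

Definition add2 (u v : Om2) : Om2 := fun i j => u i j + v i j.
Definition lact2 (a : A) (t : Om2) : Om2 := fun i j => a * t i j.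
(* (dz^i (x) dz^j) b = sigma_i(sigma_j b) dz^i (x) dz^j *)
Definition ract2 (t : Om2) (b : A) : Om2 :=
  fun i j => t i j * sigma i (sigma j b).
Definition sum2 n (F : 'I_n -> Om2) : Om2 := fun i j => \sum_(k < n) F k i j.

(* omega (x)_A eta = sum_{i,j} omega_i sigma_i(eta_j) dz^i (x) dz^j *)
Definition tens (u v : Om1) : Om2 := fun i j => u i * sigma i (v j).

Definition bimod_map_to2 (g : A -> Om2) : Prop :=
  (forall x y, g (x + y) = add2 (g x) (g y)) /\
  (forall a x b, g (a * x * b) = ract2 (lact2 a (g x)) b).

Definition bimod_map_from2 (h : Om2 -> A) : Prop :=
  (forall s t, h (add2 s t) = h s + h t) /\
  (forall a t b, h (ract2 (lact2 a t) b) = a * h t * b).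

Definition gen_metric_with_inverse (g : A -> Om2) (ginv : Om2 -> A) : Prop :=
  [/\ bimod_map_to2 g, bimod_map_from2 ginv &
    exists n (gU gD : 'I_n -> Om1),
      [/\ g 1 = sum2 (fun a => tens (gU a) (gD a)),
          forall w : Om1, sum1 (fun a => lact1 (ginv (tens w (gU a))) (gD a)) = w
        & forall w : Om1, sum1 (fun a => ract1 (gU a) (ginv (tens (gD a) w))) = w]].

End Bimodules.

Definition theta_right_action (R : realType) (theta : R) (A : algType R[i])
  (z : 'I_4 -> A) (sigma : 'I_4 -> A -> A) : Prop :=
  forall i, is_alg_hom (sigma i) /\
            forall j, sigma i (z j) = Rmat theta j i *: z j.

Definition gel (R : realType) (A : algType R[i]) : Om2 A :=
  fun i j => (glow R i j)%:A.

Definition ginv (R : realType) (A : algType R[i]) (t : Om2 A) : A :=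
  \sum_(i < 4) \sum_(j < 4) t i j * (gup R i j)%:A.

(* Pair each index i with i' = i + 2 (mod 4); then g = 1/2 sum_i dz^i (x) dz^i'
   and g^-1(dz^i (x) dz^j) = 2 [j = i'].  In every row of R the entries in
   columns i and i' are inverse to each other, so sigma_i o sigma_i' fixes the
   generators and is therefore the identity of A.  As (dz^i (x) dz^j) b =
   sigma_i (sigma_j b) dz^i (x) dz^j, a tensor with scalar coefficients supported
   on the pairs (i, i') commutes with A: this makes g central and g^-1 a bimodule
   map. *)

From HB Require Import structures.
From mathcomp Require Import all_boot all_order all_algebra.
From mathcomp Require Import reals trigo.
From mathcomp Require Import complex.
From mathcomp Require boolp.
Set Implicit Arguments. Unset Strict Implicit. Unset Printing Implicit Defensive.
Import GRing.Theory Num.Theory.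
Local Open Scope ring_scope.

Definition pair_idx (i : 'I_4) : 'I_4 := inZp (i + 2).

Lemma pair_idxK : involutive pair_idx.
Proof. by move=> i; apply/val_inj; case: i => [[|[|[|[|?]]]] ?]. Qed.

Lemma eq_pair_idx i j : (j == pair_idx i) = (i == pair_idx j).
Proof. by apply/eqP/eqP => [->|->]; rewrite pair_idxK. Qed.

Lemma PmatE (K : nzRingType) i j : Pmat K i j = (j == pair_idx i)%:R.
Proof.
by rewrite mxE; case: i => [[|[|[|[|?]]]] ?] //; case: j => [[|[|[|[|?]]]] ?].
Qed.

Lemma mul_eith_emith (R : realType) (t : R) : eith t * emith t = 1.
Proof.
apply/eqP; rewrite eq_complex /= mulrN opprK -!expr2 cos2Dsin2 eqxx /=.
by rewrite [sin t * _]mulrC mulrN addNr.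
Qed.

Lemma Rmat_pair_idx (R : realType) (t : R) i k :
  Rmat t k (pair_idx i) * Rmat t k i = 1.
Proof.
have mul_emith_eith : emith t * eith t = 1 by rewrite mulrC mul_eith_emith.
rewrite !mxE; case: i => [[|[|[|[|?]]]] ?] //; case: k => [[|[|[|[|?]]]] ?] //=;
  by rewrite ?mul1r ?mul_eith_emith ?mul_emith_eith.
Qed.

Section AlgHom.
Variables (K : nzRingType) (A B : lalgType K) (f : A -> B).
Hypothesis fH : is_alg_hom f.

Lemma alg_homD a b : f (a + b) = f a + f b. Proof. by case: fH. Qed.
Lemma alg_homM a b : f (a * b) = f a * f b. Proof. by case: fH. Qed.
Lemma alg_homZ (c : K) a : f (c *: a) = c *: f a. Proof. by case: fH. Qed.
Lemma alg_hom1 : f 1 = 1. Proof. by case: fH. Qed.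
Lemma alg_hom_scalar (c : K) : f c%:A = c%:A.
Proof. by case: fH => _ fZ _ f1; rewrite fZ f1. Qed.
Lemma alg_hom0 : f 0 = 0.
Proof. by rewrite -(scale0r (1 : A)) alg_hom_scalar scale0r. Qed.

End AlgHom.

Lemma is_alg_hom_comp (K : nzRingType) (A B C : lalgType K)
  (f : B -> C) (g : A -> B) :
  is_alg_hom f -> is_alg_hom g -> is_alg_hom (f \o g).
Proof.
move=> [fD fZ fM f1] [gD gZ gM g1].
by split=> [a b|c a|a b|] /=; rewrite ?gD ?gZ ?gM ?g1 ?fD ?fZ ?fM ?f1.
Qed.

Lemma alg_hom_fix_generated (K : nzRingType) (A : lalgType K) (z : 'I_4 -> A)
  (f : A -> A) :
  generated_by z -> is_alg_hom f -> (forall i, f (z i) = z i) -> f =1 id.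
Proof.
move=> z_gen fH fz; apply: z_gen => [//|c|a b fa fb|a b fa fb].
- exact: alg_hom_scalar.
- by rewrite alg_homD // fa fb.
- by rewrite alg_homM // fa fb.
Qed.

Lemma glowE (R : realType) i j : glow R i j = if j == pair_idx i then 2^-1 else 0.
Proof. by rewrite mxE PmatE; case: eqP; rewrite ?mulr1 ?mulr0. Qed.

Lemma gupE (R : realType) i j : gup R i j = if j == pair_idx i then 2 else 0.
Proof. by rewrite mxE PmatE; case: eqP; rewrite ?mulr1 ?mulr0. Qed.

Lemma Om2_ext (A : nzRingType) (s t : Om2 A) : (forall i j, s i j = t i j) -> s = t.
Proof.
by move=> st; apply: boolp.funext => i; apply: boolp.funext.
Qed.

Section ThetaMetric.
Variables (R : realType) (theta : R) (A : algType R[i]) (z : 'I_4 -> A)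
  (sigma : 'I_4 -> A -> A).
Hypotheses (z_gen : generated_by z) (sigmaH : theta_right_action theta z sigma).

Lemma sigma_hom i : is_alg_hom (sigma i). Proof. by case: (sigmaH i). Qed.

Lemma sigma_pair_idxK i : cancel (sigma (pair_idx i)) (sigma i).
Proof.
have sigma_comp_hom := is_alg_hom_comp (sigma_hom i) (sigma_hom (pair_idx i)).
apply: (alg_hom_fix_generated z_gen sigma_comp_hom) => k /=.
case: (sigmaH (pair_idx i)) => _ ->; case: (sigmaH i) => _ sigma_z.
by rewrite (alg_homZ (sigma_hom i)) sigma_z scalerA Rmat_pair_idx scale1r.
Qed.

Lemma scale_pair_sigmaK (c : R[i]) i j b :
  (if j == pair_idx i then c else 0) *: sigma i (sigma j b) =
  (if j == pair_idx i then c else 0) *: b.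
Proof. by case: eqP => [->|_]; rewrite ?sigma_pair_idxK ?scale0r. Qed.

Lemma gel_central a : lact2 a (@gel R A) = ract2 sigma (@gel R A) a.
Proof.
apply: Om2_ext => i j; rewrite /lact2 /ract2 /gel.
by rewrite mulr_algl mulr_algr glowE scale_pair_sigmaK.
Qed.

Lemma bimod_map_to2_gel : bimod_map_to2 sigma (fun a => lact2 a (@gel R A)).
Proof.
split=> [a b|a x b]; apply: Om2_ext => i j; first by rewrite /lact2 /add2 mulrDl.
by rewrite /lact2 /ract2 -!mulrA /gel mulr_algl mulr_algr glowE scale_pair_sigmaK.
Qed.

Lemma bimod_map_from2_ginv : bimod_map_from2 sigma (@ginv R A).
Proof.
split=> [s t|a t b]; rewrite /ginv /add2.
  rewrite -big_split; apply: eq_bigr => i _.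
  by rewrite -big_split; apply: eq_bigr => j _; rewrite mulrDl.
rewrite mulr_sumr mulr_suml; apply: eq_bigr => i _; rewrite mulr_sumr mulr_suml.
apply: eq_bigr => j _; rewrite /ract2 /lact2 -!mulrA.
by rewrite mulr_algl mulr_algr gupE scale_pair_sigmaK.
Qed.

Lemma ginvE (t : Om2 A) : ginv t = 2 *: \sum_i t i (pair_idx i).
Proof.
rewrite /ginv scaler_sumr; apply: eq_bigr => i _.
rewrite (big_only1 (pair_idx i)) // => [|j /negbTE jNi _]; rewrite gupE ?eqxx ?mulr_algr //.
by rewrite jNi scale0r.
Qed.

Lemma gel1_tens_dz :
  lact2 1 (@gel R A) = sum2 (fun a => tens sigma (dz A a) (@gel R A a)).
Proof.
apply: Om2_ext => i j; rewrite /lact2 /sum2 /tens mul1r (big_only1 i) // => [|a aNi _].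
  by rewrite /dz eqxx mul1r /gel (alg_hom_scalar (sigma_hom i)).
by rewrite /dz eq_sym (negbTE aNi) mul0r.
Qed.

Lemma ginv_tens_gel_l (w : Om1 A) :
  sum1 (fun a => lact1 (ginv (tens sigma w (dz A a))) (@gel R A a)) = w.
Proof.
have ginv_w_dz a : ginv (tens sigma w (dz A a)) = 2 *: w (pair_idx a).
  rewrite ginvE (big_only1 (pair_idx a)) // => [|i iNa _]; rewrite /tens /dz.
    by rewrite pair_idxK eqxx (alg_hom1 (sigma_hom _)) mulr1.
  by rewrite eq_sym eq_pair_idx (negbTE iNa) (alg_hom0 (sigma_hom _)) mulr0.
apply: boolp.funext => k; rewrite /sum1 /lact1.
rewrite (big_only1 (pair_idx k)) // => [|a aNk _]; rewrite ginv_w_dz /gel glowE.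
  by rewrite pair_idxK eqxx mulr_algr scalerA mulVf ?pnatr_eq0 ?scale1r.
by rewrite eq_pair_idx (negbTE aNk) scale0r mulr0.
Qed.

Lemma ginv_tens_gel_r (w : Om1 A) :
  sum1 (fun a => ract1 sigma (dz A a) (ginv (tens sigma (@gel R A a) w))) = w.
Proof.
have ginv_gel_w a : ginv (tens sigma (@gel R A a) w) = sigma (pair_idx a) (w a).
  rewrite ginvE (big_only1 (pair_idx a)) // => [|i iNa _]; rewrite /tens /gel glowE.
    by rewrite pair_idxK eqxx mulr_algl scalerA mulfV ?pnatr_eq0 ?scale1r.
  by rewrite (negbTE iNa) scale0r mul0r.
apply: boolp.funext => k; rewrite /sum1 /ract1.
rewrite (big_only1 k) // => [|a aNk _]; rewrite /dz.
  by rewrite eqxx mul1r ginv_gel_w sigma_pair_idxK.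
by rewrite eq_sym (negbTE aNk) mul0r.
Qed.

End ThetaMetric.

Theorem lemma4p2 (R : realType) (theta : R) (A : algType R[i])
  (z : 'I_4 -> A) (sigma : 'I_4 -> A -> A) :
  presented_Rtheta theta z ->
  theta_right_action theta z sigma ->
  (forall a : A, lact2 a (@gel R A) = ract2 sigma (@gel R A) a) /\
  gen_metric_with_inverse sigma (fun a : A => lact2 a (@gel R A)) (@ginv R A).
Proof.
move=> [_ z_gen _] sigmaH; split; first exact: gel_central z_gen sigmaH.
split; first exact: bimod_map_to2_gel z_gen sigmaH.
  exact: bimod_map_from2_ginv z_gen sigmaH.
exists 4%N, (dz A), (@gel R A); split.
- exact: gel1_tens_dz sigmaH.
- exact: ginv_tens_gel_l sigmaH.
- exact: ginv_tens_gel_r z_gen sigmaH.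
Qed.
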